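(* For every $k\geq 4$, the group $\mathrm{PFB}_k$ is not virtually a product of two infinite groups.
   Context: $\mathrm{FB}_k=\langle \sigma_1,\ldots,\sigma_{k-1}\mid \sigma_i^2=1,\ [\sigma_i,\sigma_j]=1 \text{ whenever } |i-j|\ge 2\rangle$, and $\mathrm{PFB}_k$ is the kernel of the homomorphism $\mathrm{FB}_k\to\mathrm{Sym}(k)$ sending $\sigma_i$ to $(i,i+1)$. *)

From mathcomp Require Import all_boot.
Set Implicit Arguments. Unset Strict Implicit. Unset Printing Implicit Defensive.

(* Words in the generators sigma_1, ..., sigma_{k-1} of FB_k.
   The letter i : 'I_k.-1 stands for sigma_{i+1}. *)
Definition word (k : nat) := seq 'I_k.-1.

(* The congruence on words generated by the defining relations of FB_k:
   sigma_i^2 = 1 and sigma_i sigma_j = sigma_j sigma_i for |i - j| >= 2.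
   Since all generators are involutions, words modulo this congruence form
   exactly the group FB_k (product = concatenation, unit = [::],
   inverse = reversal). *)
Inductive fb_eq (k : nat) : word k -> word k -> Prop :=
| fb_refl (w : word k) : fb_eq w w
| fb_sym (u v : word k) : fb_eq u v -> fb_eq v u
| fb_trans (u v w : word k) : fb_eq u v -> fb_eq v w -> fb_eq u w
| fb_sq (u v : word k) (i : 'I_k.-1) : fb_eq (u ++ i :: i :: v) (u ++ v)
| fb_comm (u v : word k) (i j : 'I_k.-1) :
    (i.+2 <= j) || (j.+2 <= i) -> fb_eq (u ++ i :: j :: v) (u ++ j :: i :: v).
Arguments fb_eq {k}.

(* The transposition (i, i+1) of {0, ..., k-1} (0-indexed), acting on nat;
   letter i (= sigma_{i+1}) maps to the transposition (i+1, i+2) in 1-indexed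
   positions. *)
Definition swap (i x : nat) : nat :=
  if x == i then i.+1 else if x == i.+1 then i else x.

Definition word_act (k : nat) (w : word k) (x : nat) : nat :=
  foldr (fun (i : 'I_k.-1) y => swap i y) x w.

(* PFB_k: the kernel of FB_k -> Sym(k) (a saturated set of words). *)
Definition PFB (k : nat) (w : word k) : Prop :=
  forall x, x < k -> word_act w x = x.

(* A subgroup of FB_k, given as an fb_eq-saturated set of words. *)
Definition fb_subgroup (k : nat) (H : word k -> Prop) : Prop :=
  [/\ (forall u v, fb_eq u v -> H u -> H v),
      H [::],
      (forall u v, H u -> H v -> H (u ++ v)) &
      (forall u, H u -> H (rev u))].

Definition finite_index_in (k : nat) (G H : word k -> Prop) : Prop :=
  exists ts : seq (word k),
    forall g, G g -> exists2 t, t \in ts & exists h, H h /\ fb_eq g (t ++ h).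

(* A (as a set of group elements) is infinite: it meets infinitely many
   fb_eq-classes. *)
Definition infinite_elts (k : nat) (A : word k -> Prop) : Prop :=
  forall ts : seq (word k), exists a, A a /\ forall t, t \in ts -> ~ fb_eq a t.

Definition internal_direct_product (k : nat) (H A B : word k -> Prop) : Prop :=
  [/\ fb_subgroup A, fb_subgroup B,
      ((forall a, A a -> H a) /\ (forall b, B b -> H b)),
      ((forall a b, A a -> B b -> fb_eq (a ++ b) (b ++ a)) /\
       (forall x, A x -> B x -> fb_eq x [::])) &
      (forall h, H h -> exists a b, [/\ A a, B b & fb_eq h (a ++ b)])].

Definition virtually_product_of_two_infinite (k : nat) (G : word k -> Prop)
  : Prop :=
  exists H A B : word k -> Prop,
    [/\ (fb_subgroup H /\ (forall h, H h -> G h)), finite_index_in G H,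
        internal_direct_product H A B, infinite_elts A & infinite_elts B].

From mathcomp Require Import all_boot zify.
From Stdlib Require Import FunctionalExtensionality Setoid Morphisms.
Set Implicit Arguments. Unset Strict Implicit. Unset Printing Implicit Defensive.

(* FB_k is the right-angled Coxeter group of the path s_1 - s_2 - ... - s_(k-1).  Its element
   c = s_1 s_2 ... s_(k-1) s_(k-2) ... s_2 maps to a 3-cycle of Sym(k), so c^3 lies in PFB_k,
   and every element commuting with a positive power of c is a power of c or of c^-1.
   Suppose a finite-index subgroup H of PFB_k were A x B with A and B infinite.  As H has
   finite index, some power c^d lies in H; write c^d = ab.  Then a commutes with c^d, so it is
   a power of c.  Whichever factor, A or B, contains a nontrivial power of c, every element of
   the other factor commutes with it and is therefore itself a power of c; so A and B share a
   nontrivial power of c, although they intersect trivially and c has infinite order.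

   The centralizer is computed with reduced words.  Two reduced words of the same element have
   the same projections to the dihedral subgroups <s_j, s_(j+1)>; hence they have the same
   length and can start with the same letters, and a word whose consecutive letters are
   adjacent generators is the unique reduced word of its element.  If x commutes with a long
   power of c, cancelling x against that power from both sides forces a reduced word of x to
   be a prefix of the periodic word c c c ... followed by the inverse of such a prefix. *)

(** * Projections of words to the dihedral subgroups *)

Definition far (i j : nat) := (i.+2 <= j) || (j.+2 <= i).

Definition edge (j x : nat) := (x == j) || (x == j.+1).

Definition edge_proj (s : seq nat) (j : nat) : seq nat := filter (edge j) s.
Arguments edge_proj : simpl never.

Definition leading (i : nat) (s : seq nat) :=
  ohead [seq x <- s | ~~ far i x] == Some i.

Fixpoint cancellable (s : seq nat) :=
  if s is i :: s' then leading i s' || cancellable s' else false.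

(* For i = 0 both conjuncts test the same projection: letter 0 only lies in edge 0. *)
Definition front_cancels (i : nat) (P : nat -> seq nat) :=
  (ohead (P i) == Some i) && (ohead (P i.-1) == Some i).

(* On the family of projections of a word s without cancellable pair, [proj_act i] is left
   multiplication by the letter i, which cancels exactly when i can be moved to the front of s
   (front_cancels_proj, proj_actK); this makes [proj_eval] an invariant of fb_eq. *)
Definition proj_act (i : nat) (P : nat -> seq nat) (j : nat) : seq nat :=
  if edge j i then (if front_cancels i P then behead (P j) else i :: P j)
  else P j.

Definition proj_eval (s : seq nat) : nat -> seq nat :=
  foldr proj_act (fun _ => [::]) s.

Definition irreducible_proj (P : nat -> seq nat) :=
  exists2 s, ~~ cancellable s & P = edge_proj s.

Lemma far_sym i j : far i j = far j i.
Proof. rewrite /far; lia. Qed.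

Lemma farnn i : far i i = false.
Proof. rewrite /far; lia. Qed.

Lemma edge_far i j y : edge j i -> far i y -> edge j y = false.
Proof. rewrite /edge /far; lia. Qed.

Lemma edgenn i : edge i i.
Proof. by rewrite /edge eqxx. Qed.

Lemma edge_pred i : edge i.-1 i.
Proof. rewrite /edge; lia. Qed.

Lemma edgeE j i : edge j i = (j == i) || (j == i.-1).
Proof. rewrite /edge; lia. Qed.

Lemma edge_proj_cons i s :
  edge_proj (i :: s) = fun j => if edge j i then i :: edge_proj s j else edge_proj s j.
Proof. by apply: functional_extensionality => j; rewrite /edge_proj /=. Qed.

Lemma leading_cons i y s :
  leading i (y :: s) = if far i y then leading i s else y == i.
Proof. by rewrite /leading /=; case: (far i y). Qed.

Lemma leading_head i s : leading i (i :: s).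
Proof. by rewrite leading_cons farnn. Qed.

Lemma leadingP i s :
  reflect (exists b c, s = b ++ i :: c /\ all (far i) b) (leading i s).
Proof.
apply: (iffP idP).
  elim: s => [|y s IH] //; rewrite leading_cons.
  case Hf: (far i y).
    by case/IH => b [c [-> Hb]]; exists (y :: b), c; rewrite /= Hf.
  by move/eqP=> ->; exists [::], s.
case=> b [c [-> Hb]]; elim: b Hb => [_|y b IH] /=; first exact: leading_head.
by case/andP=> Hy Hb; rewrite leading_cons Hy IH.
Qed.

Lemma leading_mem i s : leading i s -> i \in s.
Proof.
by case/leadingP=> b [c [-> _]]; rewrite mem_cat mem_head orbT.
Qed.

Lemma cancellableP s :
  reflect (exists a i b c, s = a ++ i :: b ++ i :: c /\ all (far i) b) (cancellable s).
Proof.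
apply: (iffP idP).
  elim: s => [|y s IH] //= /orP [/leadingP [b [c [-> Hb]]]|/IH [a [i [b [c [-> Hb]]]]]].
    by exists [::], y, b, c.
  by exists (y :: a), i, b, c.
case=> a [i [b [c [-> Hb]]]]; elim: a => [|y a IH] /=; last by rewrite IH orbT.
by apply/orP; left; apply/leadingP; exists b, c.
Qed.

Lemma cancellable_rev s : cancellable (rev s) = cancellable s.
Proof.
suff H t : cancellable t -> cancellable (rev t).
  by apply/idP/idP => /H //; rewrite revK.
case/cancellableP=> a [i [b [c [-> Hb]]]]; apply/cancellableP.
exists (rev c), i, (rev b), (rev a); split; last by rewrite all_rev.
by rewrite !(rev_cat, rev_cons) -!cats1 -!catA.
Qed.

Lemma front_cancels_proj i s : front_cancels i (edge_proj s) = leading i s.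
Proof.
elim: s => [|y s IH] //; rewrite leading_cons -IH /front_cancels edge_proj_cons /=.
case Hf: (far i y); first by rewrite (edge_far (edgenn i) Hf) (edge_far (edge_pred i) Hf).
case: (eqVneq y i) => [->|Hyi]; first by rewrite edgenn edge_pred /= eqxx.
have [->|<-] : y = i.+1 \/ y.+1 = i by move: Hf Hyi; rewrite /far; lia.
  by rewrite /edge eqxx orbT /=; case: eqP => // -[]; lia.
by rewrite edgenn /= andbC; case: eqP => // -[]; lia.
Qed.

Lemma proj_act_push i P : ~~ front_cancels i P ->
  proj_act i P = fun j => if edge j i then i :: P j else P j.
Proof.
by move/negbTE=> H; apply: functional_extensionality => j; rewrite /proj_act H.
Qed.

Lemma proj_act_pop i P : front_cancels i P ->
  proj_act i P = fun j => if edge j i then behead (P j) else P j.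
Proof.
by move=> H; apply: functional_extensionality => j; rewrite /proj_act H.
Qed.

Lemma proj_eval_irreducible s : ~~ cancellable s -> proj_eval s = edge_proj s.
Proof.
elim: s => [_|i s IH] /=; first exact: functional_extensionality.
rewrite negb_or => /andP [Hi Hs].
by rewrite IH // proj_act_push ?front_cancels_proj // edge_proj_cons.
Qed.

Lemma edge_proj_rem i s j : leading i s ->
  edge_proj (rem i s) j = if edge j i then behead (edge_proj s j) else edge_proj s j.
Proof.
elim: s => [|y s IH] //=; rewrite leading_cons.
case: (eqVneq y i) => [->|Hyi] H; first by rewrite edge_proj_cons /=; case: edge.
have Hf : far i y by move: H; case: far; rewrite // (negbTE Hyi).
rewrite Hf in H; rewrite !edge_proj_cons /= IH //.
by case Hj: (edge j i); rewrite // (edge_far Hj Hf).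
Qed.

Lemma proj_act_leading i s : leading i s -> proj_act i (edge_proj s) = edge_proj (rem i s).
Proof.
move=> H; rewrite proj_act_pop ?front_cancels_proj //.
by apply: functional_extensionality => j; rewrite edge_proj_rem.
Qed.

Lemma edge_proj_cons_rem i s : leading i s -> edge_proj (i :: rem i s) = edge_proj s.
Proof.
move=> H; rewrite edge_proj_cons; apply: functional_extensionality => j.
rewrite edge_proj_rem //; case Hj: (edge j i) => //.
move: H; rewrite -front_cancels_proj /front_cancels => /andP [/eqP H1 /eqP H2].
move: Hj; rewrite edgeE => /orP [] /eqP ->; [move: H1 | move: H2].
  by case: edge_proj => // a l [->].
by case: edge_proj => // a l [->].
Qed.

Lemma leading_rem_irreducible i s : leading i s -> ~~ cancellable s ->
  ~~ cancellable (rem i s) && ~~ leading i (rem i s).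
Proof.
elim: s => [|y s IH] //=; rewrite leading_cons.
case: (eqVneq y i) => [-> _|Hyi]; first by rewrite negb_or andbC.
case Hf: (far i y) => // H; rewrite negb_or => /andP [Hy Hs].
have /andP [H1 H2] := IH H Hs.
rewrite /= leading_cons Hf H2 andbT negb_or H1 andbT.
move: Hy; rewrite /leading.
suff -> : [seq x <- rem i s | ~~ far y x] = [seq x <- s | ~~ far y x] by [].
elim: (s) => [|z t IHt] //=.
by case: (eqVneq z i) => [->|Hz]; rewrite /= ?IHt // far_sym Hf.
Qed.

Lemma proj_actK i P : irreducible_proj P ->
  irreducible_proj (proj_act i P) /\ proj_act i (proj_act i P) = P.
Proof.
case=> s Hs ->; case H: (leading i s).
  have /andP [H1 H2] := leading_rem_irreducible H Hs.
  rewrite proj_act_leading //; split; first by exists (rem i s).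
  rewrite proj_act_push ?front_cancels_proj // -edge_proj_cons.
  exact: edge_proj_cons_rem.
have E : proj_act i (edge_proj s) = edge_proj (i :: s).
  by rewrite proj_act_push ?front_cancels_proj ?H // edge_proj_cons.
rewrite E; split; first by exists (i :: s); rewrite /= ?H.
by rewrite proj_act_leading ?leading_head //= eqxx.
Qed.

Lemma proj_act_comm i j P : far i j -> proj_act i (proj_act j P) = proj_act j (proj_act i P).
Proof.
move=> Hf; apply: functional_extensionality => x.
have Hf' : far j i by rewrite far_sym.
have F1 : front_cancels i (proj_act j P) = front_cancels i P.
  by rewrite /front_cancels /proj_act (edge_far (edgenn i) Hf) (edge_far (edge_pred i) Hf).
have F2 : front_cancels j (proj_act i P) = front_cancels j P.
  by rewrite /front_cancels /proj_act (edge_far (edgenn j) Hf') (edge_far (edge_pred j) Hf').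
rewrite /proj_act F1 F2.
case Hxi: (edge x i); case Hxj: (edge x j) => //.
by move: Hxi Hxj Hf; rewrite !edgeE /far; lia.
Qed.

Lemma irreducible_proj_eval s : irreducible_proj (proj_eval s).
Proof.
elim: s => [|i s IH] /=; first by exists [::].
by case: (proj_actK i IH).
Qed.

Lemma proj_eval_cat s1 s2 : proj_eval (s1 ++ s2) = foldr proj_act (proj_eval s2) s1.
Proof. by rewrite /proj_eval foldr_cat. Qed.

Section Words.
Variable k : nat.
Implicit Types u v w : word k.

Lemma fb_eq_catl w u v : fb_eq u v -> fb_eq (w ++ u) (w ++ v).
Proof.
elim=> {u v} [u|u v _ IH|u v t _ IH1 _ IH2|u v i|u v i j H].
- exact: fb_refl.
- exact: fb_sym IH.
- exact: fb_trans IH1 IH2.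
- by rewrite !catA; apply: fb_sq.
- by rewrite !catA; apply: fb_comm.
Qed.

Lemma fb_eq_catr w u v : fb_eq u v -> fb_eq (u ++ w) (v ++ w).
Proof.
elim=> {u v} [u|u v _ IH|u v t _ IH1 _ IH2|u v i|u v i j H].
- exact: fb_refl.
- exact: fb_sym IH.
- exact: fb_trans IH1 IH2.
- by rewrite -!catA; apply: fb_sq.
- by rewrite -!catA; apply: fb_comm.
Qed.

Lemma fb_eq_rev u v : fb_eq u v -> fb_eq (rev u) (rev v).
Proof.
have rev2 (x y : 'I_k.-1) t : rev [:: x, y & t] = rev t ++ [:: y; x].
  by rewrite -[[:: x, y & t]]/([:: x; y] ++ t) rev_cat.
elim=> {u v} [u|u v _ IH|u v t _ IH1 _ IH2|u v i|u v i j H].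
- exact: fb_refl.
- exact: fb_sym IH.
- exact: fb_trans IH1 IH2.
- by rewrite !rev_cat rev2 -catA; apply: fb_sq.
- by rewrite !rev_cat !rev2 -!catA; apply/fb_sym/fb_comm.
Qed.

End Words.

Add Parametric Relation k : (word k) (@fb_eq k)
  reflexivity proved by (@fb_refl k) symmetry proved by (@fb_sym k)
  transitivity proved by (@fb_trans k) as fb_eq_rel.

#[local] Hint Resolve fb_refl : core.

Add Parametric Morphism k : (@cat 'I_k.-1)
  with signature @fb_eq k ==> @fb_eq k ==> @fb_eq k as fb_eq_cat.
Proof. by move=> u u' Hu v v' Hv; apply: fb_trans (fb_eq_catr _ Hu) (fb_eq_catl _ Hv). Qed.

Add Parametric Morphism k (i : 'I_k.-1) : (cons i)
  with signature @fb_eq k ==> @fb_eq k as fb_eq_cons.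
Proof. exact: fb_eq_catl [:: i]. Qed.

Add Parametric Morphism k : (@rev 'I_k.-1)
  with signature @fb_eq k ==> @fb_eq k as fb_eq_rev_morph.
Proof. exact: fb_eq_rev. Qed.

Definition fb_commute k (u v : word k) := fb_eq (u ++ v) (v ++ u).

Definition wpow T (w : seq T) n := flatten (nseq n w).

Lemma wpowS T (w : seq T) n : wpow w n.+1 = w ++ wpow w n.
Proof. by []. Qed.

Lemma wpowD T (w : seq T) a b : wpow w (a + b) = wpow w a ++ wpow w b.
Proof. by rewrite /wpow nseqD flatten_cat. Qed.

Lemma wpowM T (w : seq T) a b : wpow (wpow w a) b = wpow w (a * b).
Proof. by elim: b => [|b IH]; rewrite ?muln0 // wpowS IH mulnS wpowD. Qed.

Section Inverse.
Variable k : nat.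
Implicit Types u v w : word k.

Lemma fb_catVw w : fb_eq (rev w ++ w) [::].
Proof.
elim: w => [|i w IH] //.
by rewrite rev_cons -cats1 -catA /= (fb_sq (rev w) w i).
Qed.

Lemma fb_catwV w : fb_eq (w ++ rev w) [::].
Proof. by have := fb_catVw (rev w); rewrite revK. Qed.

Lemma fb_consK (i : 'I_k.-1) u v : fb_eq (i :: u) (i :: v) -> fb_eq u v.
Proof.
move=> H; apply: fb_trans (fb_sym (fb_sq [::] u i)) (fb_trans _ (fb_sq [::] v i)).
exact: fb_eq_catl [:: i] _ _ H.
Qed.

Lemma fb_eq_proj_eval u v : fb_eq u v -> proj_eval (map val u) = proj_eval (map val v).
Proof.
elim=> {u v} [u|u v _ IH|u v t _ IH1 _ IH2|u v i|u v i j H] //.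
- by rewrite IH1 IH2.
- rewrite !map_cat !proj_eval_cat /=.
  by case: (proj_actK (val i) (irreducible_proj_eval (map val v))) => _ ->.
- by rewrite !map_cat !proj_eval_cat /= proj_act_comm.
Qed.

Lemma fb_commute_pow u v m : fb_commute u v -> fb_commute u (wpow v m).
Proof.
rewrite /fb_commute => H; elim: m => [|m IH]; first by rewrite cats0.
by rewrite wpowS catA H -!catA IH.
Qed.

Lemma fb_commute_rev u v : fb_commute u v -> fb_commute u (rev v).
Proof.
rewrite /fb_commute => H.
have -> : fb_eq (u ++ rev v) (rev v ++ (v ++ u) ++ rev v) by rewrite !catA fb_catVw.
by rewrite -H -!catA fb_catwV cats0.
Qed.

End Inverse.

(** * Reduced words and chains *)

Section Reduced.
Variable k : nat.
Implicit Types u v w : word k.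

Definition reduced w := ~~ cancellable (map val w).

Lemma map_val_rem (i : 'I_k.-1) w : map val (rem i w) = rem (val i) (map val w).
Proof. by elim: w => [|y w IH] //=; rewrite val_eqE; case: eqP => //= _; rewrite IH. Qed.

Lemma fb_leading_rem (i : 'I_k.-1) w :
  leading (val i) (map val w) -> fb_eq (i :: w) (rem i w).
Proof.
elim: w => [|y w IH] //=; rewrite leading_cons.
case: (eqVneq y i) => [-> _|Hyi]; first exact: (fb_sq [::] w i).
case Hf: (far i y) => H; last by case/eqP: Hyi; apply/val_inj/eqP.
by apply: fb_trans (fb_comm [::] w Hf) _; rewrite /= (IH H).
Qed.

Lemma cancellable_shorten w :
  cancellable (map val w) -> exists2 w', fb_eq w w' & size w' < size w.
Proof.
elim: w => [|i w IH] //= /orP [H|/IH [w' H1 H2]].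
  exists (rem i w); first exact: fb_leading_rem.
  have Hi : i \in w by rewrite -(mem_map val_inj); exact: leading_mem.
  by rewrite size_rem //; case: (w) Hi.
by exists (i :: w'); [rewrite H1 | rewrite ltnS].
Qed.

Lemma exists_reduced w : exists w', [/\ fb_eq w w', reduced w' & size w' <= size w].
Proof.
elim: {w}(size w) {-2}w (leqnn (size w)) => [|n IH] w Hw.
  by case: w Hw => // _; exists [::]; split.
case H: (cancellable (map val w)); last by exists w; rewrite /reduced H.
case: (cancellable_shorten H) => w' H1 H2.
case: (IH w') => [|w'' [H3 H4 H5]]; first by move: H2 Hw; lia.
by exists w''; split; [rewrite H1 | | move: H2 H5; lia].
Qed.

Section Equivalent.
Variables u v : word k.
Hypotheses (Hu : reduced u) (Hv : reduced v) (Huv : fb_eq u v).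

Lemma reduced_edge_proj : edge_proj (map val u) = edge_proj (map val v).
Proof. by rewrite -!proj_eval_irreducible //; exact: fb_eq_proj_eval. Qed.

Lemma reduced_leading i : leading i (map val u) = leading i (map val v).
Proof. by rewrite -!front_cancels_proj reduced_edge_proj. Qed.

Lemma reduced_size : size u = size v.
Proof.
rewrite -(size_map val u) -(size_map val v); apply: perm_size.
apply/allP => x _; apply/eqP.
have C s : count_mem x s = count_mem x (edge_proj s x).
  by rewrite /edge_proj count_filter; apply: eq_count => y /=; case: eqP => // ->; rewrite edgenn.
by rewrite C reduced_edge_proj -C.
Qed.

End Equivalent.

Lemma reduced_of_size u v : reduced u -> fb_eq u v -> size v = size u -> reduced v.
Proof.
move=> Hu Huv Hs; apply/negP => /cancellable_shorten [v' Hv' Hlt].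
case: (exists_reduced v') => w [Hw Hred Hle].
have := reduced_size Hu Hred (fb_trans Huv (fb_trans Hv' Hw)).
by move: Hlt Hle Hs; lia.
Qed.

Lemma reduced_rev w : reduced (rev w) = reduced w.
Proof. by rewrite /reduced map_rev cancellable_rev. Qed.

Lemma reduced_behead (i : 'I_k.-1) w : reduced (i :: w) -> reduced w.
Proof. by rewrite /reduced /= negb_or => /andP []. Qed.

End Reduced.

Definition adjacent (x y : nat) := (x == y.+1) || (y == x.+1).

Lemma adjacent_far x y : adjacent x y -> far x y = false.
Proof. rewrite /adjacent /far; lia. Qed.

Lemma adjacent_neq x y : adjacent x y -> (y == x) = false.
Proof. rewrite /adjacent; lia. Qed.

Lemma adjacent_sym x y : adjacent x y = adjacent y x.
Proof. by rewrite /adjacent orbC. Qed.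

Lemma sorted_adjacent_rev s : sorted adjacent s -> sorted adjacent (rev s).
Proof. by rewrite rev_sorted; apply: sub_sorted => x y; rewrite adjacent_sym. Qed.

Lemma sorted_adjacent_irreducible s : sorted adjacent s -> ~~ cancellable s.
Proof.
elim: s => [|c s IH] //= Hs; rewrite negb_or IH ?(path_sorted Hs) // andbT.
case: s Hs {IH} => [|d s] /=; first by rewrite /leading.
by case/andP => Hcd _; rewrite leading_cons adjacent_far // adjacent_neq.
Qed.

Lemma leading_sorted_adjacent c C z b : sorted adjacent (c :: C) -> b \in c :: C ->
  leading b ((c :: C) ++ z) -> b = c.
Proof.
elim: C c => [|d C IH] c /=; first by move=> _; rewrite inE => /eqP.
case/andP => Hcd HC; rewrite inE => /orP [/eqP //|Hb].
case: (eqVneq b c) => // Hbc; rewrite leading_cons.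
case Hf: (far b c); last by move/eqP => E; rewrite E eqxx in Hbc.
by move/(IH d HC Hb) => E; rewrite E far_sym adjacent_far in Hf.
Qed.

Lemma leading_succ_false a s : leading a s -> leading a.+1 s -> False.
Proof.
elim: s => [|y s IH] //; rewrite !leading_cons /far.
by case: ifP; case: ifP => H2 H1 //; [move=> _ /eqP|move=> /eqP ? _|move=> /eqP ? /eqP]; lia.
Qed.

Section Chains.
Variable k : nat.
Implicit Types u v w y z : word k.

Lemma reduced_sorted_adjacent_eq v w :
  sorted adjacent (map val w) -> reduced v -> fb_eq v w -> v = w.
Proof.
elim: w v => [|i w IH] [|j v] Hw Hv H;
  have := reduced_size Hv (sorted_adjacent_irreducible Hw) H => //= -[Hs].
have Hj : leading (val j) (map val (i :: w)).
  by rewrite -(reduced_leading Hv (sorted_adjacent_irreducible Hw) H) leading_head.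
have Eji : j = i.
  apply: val_inj; apply: (@leading_sorted_adjacent _ _ [::] _ Hw); last by rewrite cats0.
  exact: leading_mem.
rewrite Eji in H Hv *; congr (_ :: _).
exact: IH (path_sorted Hw) (reduced_behead Hv) (fb_consK H).
Qed.

Lemma sorted_adjacent_mul_reduced C y : sorted adjacent (map val C) -> reduced y ->
  exists C1 C2 z, [/\ C = C1 ++ C2, fb_eq y (rev C2 ++ z),
                     size y = size C2 + size z & reduced (C1 ++ z)].
Proof.
elim: C => [|a C IH] Hs Hy; first by exists [::], [::], y.
case: (IH (path_sorted Hs) Hy) => [[|c C1] [C2 [z [E1 E2 E3 E4]]]];
  rewrite {}E1 in Hs *; last first.
  have /andP [Hac _] := Hs.
  exists (a :: c :: C1), C2, z; split => //.
  by rewrite /reduced /= leading_cons adjacent_far // adjacent_neq.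
case H: (leading (val a) (map val z)); last first.
  by exists [:: a], C2, z; split => //; rewrite /reduced /= H.
have Ha : a \in z by rewrite -(mem_map val_inj); exact: leading_mem.
exists [::], (a :: C2), (rem a z); split => //.
- rewrite E2 rev_cons -cats1 -catA /= -(fb_leading_rem H).
  by rewrite (fb_sq [::] z a : fb_eq [:: a, a & z] z).
- by rewrite /= (size_rem Ha) E3; case: (z) Ha => //= b z' _; rewrite addnS.
- by rewrite /= /reduced map_val_rem; case/andP: (leading_rem_irreducible H E4).
Qed.

End Chains.

(** * The zigzag element *)

Lemma foldr_swap_iota a m x : foldr swap x (iota a m) =
  if a <= x <= a + m then (if x == a + m then a else x.+1) else x.
Proof.
elim: m a => [|m IH] a /=.
  rewrite addn0; case: ifP => // H; have -> : x = a by lia.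
  by rewrite eqxx.
by rewrite IH /swap; do ![case: ifP | move=> ?]; lia.
Qed.

Lemma foldr_swap_rev_iota a m x : foldr swap x (rev (iota a m)) =
  if a <= x <= a + m then (if x == a then a + m else x.-1) else x.
Proof.
elim: m => [|m IH].
  rewrite addn0; case: ifP => // H; have -> : x = a by lia.
  by rewrite eqxx.
have -> : iota a m.+1 = iota a m ++ [:: a + m] by rewrite -addn1 iotaD.
by rewrite rev_cat /= IH /swap; do ![case: ifP | move=> ?]; lia.
Qed.

Lemma word_act_cat k (u v : word k) x : word_act (u ++ v) x = word_act u (word_act v x).
Proof. by rewrite /word_act foldr_cat. Qed.

Lemma PFB_pow k (w : word k) m : PFB w -> PFB (wpow w m).
Proof. by move=> Hw x Hx; elim: m => [|m IH] //; rewrite wpowS word_act_cat IH Hw. Qed.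

Section Zigzag.
Variable n : nat.
Local Notation p := (2 * n.+1).

(* [zigzag j] is the j-th letter of the periodic word 0 1 ... (n+1) n ... 1 0 1 ..., the
   powers of [zigzag_elt]; [zigzag_word i a] is its segment of length a starting at position i. *)
Definition zigzag (j : nat) := minn (j %% p) (p - j %% p).

Definition zigzag_word (i a : nat) : word n.+3 :=
  [seq inord (zigzag j) | j <- iota i a].

Lemma zigzag_lt j : zigzag j < n.+2.
Proof. have := ltn_pmod j (isT : 0 < p); rewrite /zigzag; lia. Qed.

Lemma val_inord_zigzag j : val (inord (zigzag j) : 'I_n.+2) = zigzag j.
Proof. by rewrite /= inordK // zigzag_lt. Qed.

Lemma map_val_zigzag_word i a : map val (zigzag_word i a) = map zigzag (iota i a).
Proof. by rewrite -map_comp; apply: eq_map => j /=; rewrite val_inord_zigzag. Qed.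

Lemma size_zigzag_word i a : size (zigzag_word i a) = a.
Proof. by rewrite size_map size_iota. Qed.

Lemma zigzag_word_cat i a b : zigzag_word i (a + b) = zigzag_word i a ++ zigzag_word (i + a) b.
Proof. by rewrite /zigzag_word iotaD map_cat. Qed.

Lemma zigzag_word_cons i a : zigzag_word i a.+1 = inord (zigzag i) :: zigzag_word i.+1 a.
Proof. by []. Qed.

Lemma rev_zigzag_word_cons i a :
  rev (zigzag_word i a.+1) = inord (zigzag (i + a)) :: rev (zigzag_word i a).
Proof. by rewrite -[a.+1]addn1 zigzag_word_cat rev_cat. Qed.

Lemma zigzag_period m j : zigzag (m * p + j) = zigzag j.
Proof. by rewrite /zigzag !modnMDl. Qed.

Lemma zigzag_word_period m i a : zigzag_word (i + m * p) a = zigzag_word i a.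
Proof.
by rewrite /zigzag_word addnC iotaDl -map_comp; apply: eq_map => j /=; rewrite zigzag_period.
Qed.

Lemma zigzag0 : zigzag 0 = 0.
Proof. by rewrite /zigzag mod0n min0n. Qed.

Lemma zigzag1 : zigzag 1 = 1.
Proof. rewrite /zigzag modn_small; lia. Qed.

Lemma zigzag_eq0 j : (zigzag j == 0) = (p %| j).
Proof. have := ltn_pmod j (isT : 0 < p); rewrite /dvdn /zigzag; lia. Qed.

Lemma zigzag_adjacent j : adjacent (zigzag j) (zigzag j.+1).
Proof.
have Hj := ltn_pmod j (isT : 0 < p).
have E : (j + 1) %% p = if (j %% p).+1 == p then 0 else (j %% p).+1.
  by rewrite -modnDml addn1; case: eqP => [->|ne]; rewrite ?modnn // modn_small //; lia.
rewrite /zigzag /adjacent -[j.+1]addn1 E; case: (eqVneq (j %% p).+1 p) => ?; lia.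
Qed.

Lemma sorted_adjacent_zigzag_word i a : sorted adjacent (map val (zigzag_word i a)).
Proof.
rewrite map_val_zigzag_word; elim: a i => [|[|a] IH] i //=.
by rewrite zigzag_adjacent; have := IH i.+1.
Qed.

Lemma mem_zigzag_word v i a : v < n.+2 -> p <= a -> v \in map val (zigzag_word i a).
Proof.
move=> Hv Ha; rewrite map_val_zigzag_word.
have [j Hj Hjv] : exists2 j, i <= j < i + p & j %% p = v.
  exists (i + (v + p - i %% p) %% p); first by rewrite leq_addr ltn_add2l ltn_pmod.
  have Hi : i %% p <= v + p by rewrite ltnW // ltn_addl // ltn_pmod.
  by rewrite modnDmr {1}(divn_eq i p) -addnA modnMDl subnKC // modnDr modn_small //; lia.
apply/mapP; exists j; first by rewrite mem_iota; lia.
by rewrite /zigzag Hjv; lia.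
Qed.

Lemma wpow_zigzag_word i a m : wpow (zigzag_word i (a * p)) m = zigzag_word i (m * (a * p)).
Proof. by elim: m => [|m IH] //; rewrite wpowS IH mulSn zigzag_word_cat zigzag_word_period. Qed.

Lemma zigzag_word_prefix i a (u v : word n.+3) : zigzag_word i a = u ++ v ->
  u = zigzag_word i (size u) /\ v = zigzag_word (i + size u) (size v).
Proof.
move=> E; have Ha : a = size u + size v by rewrite -size_cat -E size_zigzag_word.
move: E; rewrite Ha zigzag_word_cat => /eqP; rewrite eqseq_cat ?size_zigzag_word //.
by case/andP => /eqP E1 /eqP E2; rewrite E1 E2.
Qed.

Lemma rev_zigzag_word m : rev (zigzag_word 0 (m * p)) = zigzag_word 1 (m * p).
Proof.
have rev_period : rev (zigzag_word 0 p) = zigzag_word 1 p.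
  apply: (inj_map val_inj); rewrite map_rev !map_val_zigzag_word.
  apply: (@eq_from_nth _ 0); rewrite size_rev !size_map !size_iota // => q Hq.
  rewrite nth_rev ?size_map ?size_iota // !(nth_map 0) ?size_iota ?nth_iota; try lia.
  rewrite /zigzag add0n add1n [(p - q.+1) %% _]modn_small; last by lia.
  by case: (ltngtP q.+1 p) => H; [rewrite modn_small | | rewrite H modnn]; lia.
elim: m => [|m IH] //.
rewrite mulSn zigzag_word_cat add0n rev_cat.
have E1 := zigzag_word_period 1 0 (m * p); rewrite mul1n add0n in E1.
by rewrite E1 IH rev_period addnC zigzag_word_cat (zigzag_word_period m 1).
Qed.

Lemma zigzag_reduced_prefix i N (u w y : word n.+3) : size u + p <= N ->
  reduced (zigzag_word i N ++ y) -> reduced (u ++ w) ->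
  fb_eq (zigzag_word i N ++ y) (u ++ w) -> u = zigzag_word i (size u).
Proof.
elim: u i N => [|b u IH] i [|N] // HN H1 H2 H.
have Hb : val b = zigzag i.
  have Hlead : leading (val b) (map val (zigzag_word i N.+1 ++ y)).
    by rewrite (reduced_leading H1 H2 H) leading_head.
  have Hm : val b \in map val (zigzag_word i N.+1).
    by apply: mem_zigzag_word (ltn_ord b) _; move: HN; lia.
  have Hs := sorted_adjacent_zigzag_word i N.+1.
  rewrite map_val_zigzag_word in Hm Hs; move: Hlead; rewrite map_cat map_val_zigzag_word.
  exact: leading_sorted_adjacent Hs Hm.
have Eb : inord (zigzag i) = b by apply: val_inj; rewrite val_inord_zigzag.
rewrite zigzag_word_cons Eb in H1 H.
rewrite {1}(IH i.+1 N _ (reduced_behead H1) (reduced_behead H2) (fb_consK H)).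
  by rewrite /= zigzag_word_cons Eb.
by move: HN; rewrite addSn ltnS.
Qed.

Lemma zigzag_commute_shape i N (x : word n.+3) : 0 < N -> reduced x ->
  fb_commute x (zigzag_word i (N * p)) ->
  exists m t, m + t = size x /\ fb_eq x (zigzag_word i m ++ rev (zigzag_word i t)).
Proof.
move=> HN Hx Hc.
set L := (size x).+2 * (N * p).
have HL : 2 * size x + p <= L by rewrite /L; nia.
have {}Hc : fb_commute x (zigzag_word i L) by rewrite -wpow_zigzag_word; exact: fb_commute_pow.
have Hs := sorted_adjacent_zigzag_word i L.
have Hrs : sorted adjacent (map val (rev (zigzag_word i L))).
  by rewrite map_rev; exact: sorted_adjacent_rev.
have [C1' [C2' [z' [E1 E2 E3 E4]]]] := sorted_adjacent_mul_reduced Hs Hx.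
have Hrx : reduced (rev x) by rewrite reduced_rev.
have [C1 [C2 [z [F1 F2 F3 F4]]]] := sorted_adjacent_mul_reduced Hrs Hrx.
have {}F2 : fb_eq x (rev z ++ C2) by rewrite -[x]revK F2 rev_cat revK.
have EL : zigzag_word i L = rev C2 ++ rev C1 by rewrite -[LHS]revK F1 rev_cat.
have W : fb_eq (C1' ++ z') (rev z ++ rev C1).
  have <- : fb_eq (zigzag_word i L ++ x) (C1' ++ z').
    by rewrite {1}E1 E2 -catA (catA C2') fb_catwV.
  by rewrite -Hc {1}F2 EL -catA (catA C2) fb_catwV.
have [P1 _] := zigzag_word_prefix E1.
have [Q1 _] := zigzag_word_prefix EL.
have HC : size C1' + size C2' = L by rewrite -size_cat -E1 size_zigzag_word.
have Hz : rev z = zigzag_word i (size (rev z)).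
  apply: (@zigzag_reduced_prefix i (size C1') _ (rev C1) z').
  - by move: E3 F3; rewrite !size_rev; lia.
  - by rewrite -P1.
  - by rewrite -rev_cat reduced_rev.
  - by rewrite -P1.
exists (size z), (size C2); split; first by move: F3; rewrite size_rev; lia.
by rewrite F2 Hz -[C2]revK Q1 !size_rev size_zigzag_word.
Qed.

Lemma zigzag_word_rev_period m t : zigzag_word 0 m = rev (zigzag_word 1 t) -> p %| m.
Proof.
case: m => [|m] E; first exact: dvdn0.
have Ht : t = m.+1 by rewrite -(size_zigzag_word 1 t) -size_rev -E size_zigzag_word.
move: E; rewrite Ht rev_zigzag_word_cons zigzag_word_cons => -[/(congr1 val)].
by rewrite !val_inord_zigzag zigzag0 add1n => /esym/eqP; rewrite zigzag_eq0.
Qed.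

Lemma reduced_zigzag_rev_eq a b t m s (y : word n.+3) : zigzag a != zigzag b ->
  reduced y -> fb_eq y (rev (zigzag_word a t)) ->
  m + s = size y -> fb_eq y (zigzag_word b m ++ rev (zigzag_word b s)) ->
  zigzag_word b m = rev (zigzag_word a t).
Proof.
move=> Hab Hy Ht Hs Hms.
have Hrc : sorted adjacent (map val (rev (zigzag_word a t))).
  by rewrite map_rev; apply/sorted_adjacent_rev/sorted_adjacent_zigzag_word.
have Hv : reduced (zigzag_word b m ++ rev (zigzag_word b s)).
  by apply: reduced_of_size Hy Hms _; rewrite size_cat size_rev !size_zigzag_word.
have := reduced_sorted_adjacent_eq Hrc Hv (fb_trans (fb_sym Hms) Ht).
case: s Hs Hms Hv => [|s] _ _ _; first by rewrite cats0.
move/(congr1 rev); rewrite revK rev_cat revK.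
case: t Ht Hrc => [|t] _ _; first by rewrite zigzag_word_cons.
rewrite !zigzag_word_cons => -[/(congr1 val)]; rewrite !val_inord_zigzag => Eba.
by rewrite Eba eqxx in Hab.
Qed.

Lemma reduced_zigzag_leading i a t (y : word n.+3) : reduced y ->
  a.+1 + t = size y -> fb_eq y (zigzag_word i a.+1 ++ rev (zigzag_word i t)) ->
  leading (zigzag i) (map val y).
Proof.
move=> Hy Hs Ey.
have Hv : reduced (zigzag_word i a.+1 ++ rev (zigzag_word i t)).
  by apply: reduced_of_size Hy Ey _; rewrite size_cat size_rev !size_zigzag_word.
by rewrite (reduced_leading Hy Hv Ey) zigzag_word_cons /= val_inord_zigzag leading_head.
Qed.

Definition zigzag_elt := zigzag_word 0 p.

Lemma wpow_zigzag_elt m : wpow zigzag_elt m = zigzag_word 0 (m * p).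
Proof. by have := wpow_zigzag_word 0 1 m; rewrite !mul1n. Qed.

Lemma rev_wpow_zigzag_elt m : rev (wpow zigzag_elt m) = zigzag_word 1 (m * p).
Proof. by rewrite wpow_zigzag_elt rev_zigzag_word. Qed.

Lemma zigzag_centralizer N x : 0 < N -> fb_commute x (wpow zigzag_elt N) ->
  exists j, fb_eq x (wpow zigzag_elt j) \/ fb_eq x (rev (wpow zigzag_elt j)).
Proof.
move=> HN Hc; have [y [Hxy Hy _]] := exists_reduced x.
suff [j Hj] : exists j, fb_eq y (wpow zigzag_elt j) \/ fb_eq y (rev (wpow zigzag_elt j)).
  by exists j; rewrite Hxy.
have Hc0 : fb_commute y (zigzag_word 0 (N * p)) by rewrite -wpow_zigzag_elt /fb_commute -Hxy.
have Hc1 : fb_commute y (zigzag_word 1 (N * p)).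
  by rewrite -rev_wpow_zigzag_elt; apply: fb_commute_rev; rewrite wpow_zigzag_elt.
have [m [t [Hmt Ey0]]] := zigzag_commute_shape HN Hy Hc0.
have [m' [t' [Hmt' Ey1]]] := zigzag_commute_shape HN Hy Hc1.
have H01 : zigzag 0 != zigzag 1 by rewrite zigzag0 zigzag1.
case: m Hmt Ey0 => [|m] Hmt Ey0.
  have E := reduced_zigzag_rev_eq H01 Hy Ey0 Hmt' Ey1.
  have Ht : p %| t by apply: zigzag_word_rev_period; have := congr1 rev E; rewrite revK => <-.
  by exists (t %/ p); right; rewrite rev_wpow_zigzag_elt -rev_zigzag_word divnK.
case: m' Hmt' Ey1 => [|m'] Hmt' Ey1.
  rewrite eq_sym in H01; have E := reduced_zigzag_rev_eq H01 Hy Ey1 Hmt Ey0.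
  exists (m.+1 %/ p); left; rewrite wpow_zigzag_elt divnK ?E //.
  exact: zigzag_word_rev_period E.
have := reduced_zigzag_leading Hy Hmt' Ey1; rewrite zigzag1.
have := reduced_zigzag_leading Hy Hmt Ey0; rewrite zigzag0.
by move=> H0 H1; case: (leading_succ_false H0 H1).
Qed.

Lemma word_act_zigzag x : word_act zigzag_elt x =
  if x == 0 then 1 else if x == 1 then n.+2 else if x == n.+2 then 0 else x.
Proof.
have Hseq : map zigzag (iota 0 p) = iota 0 n.+2 ++ rev (iota 1 n).
  have -> : p = n.+2 + n by lia.
  rewrite iotaD map_cat add0n; congr (_ ++ _).
    rewrite -[RHS]map_id; apply/eq_in_map => j; rewrite mem_iota => Hj.
    rewrite /zigzag modn_small; lia.
  apply: (@eq_from_nth _ 0); rewrite size_map ?size_rev !size_iota // => q Hq.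
  rewrite (nth_map 0) ?size_iota // nth_iota // nth_rev ?size_iota // nth_iota; last lia.
  rewrite /zigzag modn_small; lia.
rewrite /word_act -(foldr_map val swap) map_val_zigzag_word Hseq foldr_cat.
by rewrite foldr_swap_rev_iota foldr_swap_iota; do ![case: ifP | move=> ?]; lia.
Qed.

Lemma PFB_zigzag_elt_cube : PFB (wpow zigzag_elt 3).
Proof.
move=> x _; rewrite !wpowS -[wpow _ 0]/[::] cats0 !word_act_cat.
have c0 : word_act zigzag_elt 0 = 1 by rewrite word_act_zigzag.
have c1 : word_act zigzag_elt 1 = n.+2 by rewrite word_act_zigzag.
have c2 : word_act zigzag_elt n.+2 = 0 by rewrite word_act_zigzag /= eqxx.
case: (eqVneq x 0) => [->|H0]; first by rewrite c0 c1 c2.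
case: (eqVneq x 1) => [->|H1]; first by rewrite c1 c2 c0.
case: (eqVneq x n.+2) => [->|H2]; first by rewrite c2 c0 c1.
have cx : word_act zigzag_elt x = x.
  by rewrite word_act_zigzag (negbTE H0) (negbTE H1) (negbTE H2).
by rewrite !cx.
Qed.

Lemma zigzag_elt_pow_nontrivial j : 0 < j -> ~ fb_eq (wpow zigzag_elt j) [::].
Proof.
rewrite wpow_zigzag_elt => Hj.
have Hnil : reduced ([::] : word n.+3) by [].
move/(reduced_size (sorted_adjacent_irreducible (sorted_adjacent_zigzag_word 0 _)) Hnil).
by rewrite size_zigzag_word /=; lia.
Qed.

End Zigzag.

(** * Finite index and direct products *)

Lemma seq_pigeonhole (T : eqType) (ts : seq T) (P : nat -> T -> Prop) :
  (forall j, j <= size ts -> exists2 t, t \in ts & P j t) ->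
  exists j1 j2 t, [/\ j1 < j2, P j1 t & P j2 t].
Proof.
case: ts => [|t0 ts] Hcov; first by case: (Hcov 0 (leqnn 0)).
have Hex (j : 'I_(size ts).+2) : exists i : 'I_(size ts).+1, P j (nth t0 (t0 :: ts) i).
  have [t Ht HP] := Hcov j (ltn_ord j).
  have Hi : index t (t0 :: ts) < (size ts).+1 by rewrite index_mem.
  by exists (Ordinal Hi); rewrite nth_index.
have [f Hf] := fin_all_exists Hex.
have /injectivePn [j1 [j2 Hneq Heq]] : ~~ injectiveb f.
  by apply/injectiveP => /leq_card; rewrite !card_ord ltnn.
wlog lt12 : j1 j2 Hneq Heq / j1 < j2.
  move=> H; case: (ltngtP j1 j2) => [|lt|/val_inj eq]; [exact: H | | by rewrite eq eqxx in Hneq].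
  by apply: (H j2 j1); rewrite // eq_sym.
by exists j1, j2, (nth t0 (t0 :: ts) (f j1)); split; rewrite // Heq.
Qed.

Section Subgroups.
Variable k : nat.
Implicit Types (X G H : word k -> Prop) (c w : word k).

Lemma fb_subgroup_pow X w m : fb_subgroup X -> X w -> X (wpow w m).
Proof. by case=> _ X0 XM _ Xw; elim: m => [|m IH] //; rewrite wpowS; apply: XM. Qed.

Lemma fb_subgroup_pow_or_rev X c w j : fb_subgroup X -> X w ->
  fb_eq w (wpow c j) \/ fb_eq w (rev (wpow c j)) -> X (wpow c j).
Proof.
case=> Xsat _ _ Xrev Xw [] Hw; first exact: Xsat Hw Xw.
by apply: Xsat (Xrev _ Xw); rewrite Hw revK.
Qed.

Lemma finite_index_pow G H c : fb_subgroup H -> finite_index_in G H ->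
  (forall j, G (wpow c j)) -> exists2 d, 0 < d & H (wpow c d).
Proof.
case=> Hsat _ HM Hrev [ts Hts] Gc.
have [j1 [j2 [t [lt12 [h1 [Hh1 E1]] [h2 [Hh2 E2]]]]]] :=
  seq_pigeonhole (fun j _ => Hts _ (Gc j)).
exists (j2 - j1); first by rewrite subn_gt0.
apply: Hsat (HM _ _ (Hrev _ Hh1) Hh2).
have Ej : wpow c j2 = wpow c j1 ++ wpow c (j2 - j1) by rewrite -wpowD subnKC // ltnW.
rewrite Ej in E2.
apply: (@fb_trans _ _ ((rev (wpow c j1) ++ wpow c j1) ++ wpow c (j2 - j1))); last first.
  by rewrite fb_catVw.
by rewrite -catA E2 E1 rev_cat -catA (catA (rev t)) fb_catVw.
Qed.

End Subgroups.

Section CyclicCentralizer.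
Variables (k : nat) (c : word k).
Hypothesis centralizer_c : forall N x, 0 < N -> fb_commute x (wpow c N) ->
  exists j, fb_eq x (wpow c j) \/ fb_eq x (rev (wpow c j)).
Hypothesis c_infinite_order : forall j, 0 < j -> ~ fb_eq (wpow c j) [::].

Lemma commuting_factor_finite X Y N : fb_subgroup X -> fb_subgroup Y ->
  (forall a b, X a -> Y b -> fb_commute a b) -> (forall z, X z -> Y z -> fb_eq z [::]) ->
  0 < N -> X (wpow c N) -> ~ infinite_elts Y.
Proof.
move=> SX SY XYc XYt HN XcN /(_ [:: [::]]) [y [Yy Hy]].
have Hy1 : ~ fb_eq y [::] by apply: Hy; rewrite mem_head.
have [[|j] Hj] := centralizer_c HN (fb_sym (XYc _ _ XcN Yy)); first by case: Hj.
have Ycj := fb_subgroup_pow_or_rev SY Yy Hj.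
apply: (c_infinite_order (j := N * j.+1)); first by rewrite muln_gt0 HN.
apply: XYt; first by rewrite -wpowM; exact: fb_subgroup_pow.
by rewrite mulnC -wpowM; exact: fb_subgroup_pow.
Qed.

Lemma direct_product_pow_free H A B d : internal_direct_product H A B ->
  infinite_elts A -> infinite_elts B -> 0 < d -> ~ H (wpow c d).
Proof.
case=> SA SB _ [ABc ABt] Hdec infA infB Hd /Hdec [a [b [Aa Bb Eab]]].
have Hac : fb_commute a (wpow c d) by rewrite /fb_commute Eab -catA (ABc _ _ Aa Bb).
have [[|j] Hj] := centralizer_c Hd Hac.
  have Bcd : B (wpow c d) by case: SB => Bsat _ _ _; apply: Bsat Bb; rewrite Eab; case: Hj => ->.
  apply: commuting_factor_finite SB SA _ _ Hd Bcd infA.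
    by move=> x y Bx Ay; apply: fb_sym; exact: ABc.
  by move=> z Bz Az; exact: ABt.
have Acj := fb_subgroup_pow_or_rev SA Aa Hj.
exact: commuting_factor_finite SA SB ABc ABt (ltn0Sn j) Acj infB.
Qed.

Lemma not_virtually_product_pow_closed G m : 0 < m ->
  (forall j, G (wpow c (m * j))) -> ~ virtually_product_of_two_infinite G.
Proof.
move=> Hm Gc [H [A [B [[SH _] Hfin Hprod infA infB]]]].
have Gcm j : G (wpow (wpow c m) j) by rewrite wpowM.
have [d Hd] := finite_index_pow SH Hfin Gcm.
rewrite wpowM; apply: direct_product_pow_free Hprod infA infB _.
by rewrite muln_gt0 Hm.
Qed.

End CyclicCentralizer.

Theorem corollary2p17 (k : nat) (hk : 4 <= k) :
  ~ virtually_product_of_two_infinite (@PFB k).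
Proof.
case: k hk => [|[|[|[|n]]]] // _.
apply: (@not_virtually_product_pow_closed _ (zigzag_elt n.+1) _ _ _ 3) => //.
- exact: zigzag_centralizer.
- exact: zigzag_elt_pow_nontrivial.
- by move=> j; rewrite -wpowM; apply/PFB_pow/PFB_zigzag_elt_cube.
Qed.
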